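(* Let $\mathcal{H}$ be a $k$-conformal hypergraph on vertex set $V$ (with $k\le|V|$). If $E\in\mathrm{ext}_k(\mathcal{H})$, then there exists $F\in\mathcal{H}$ with $E\subseteq F$.
   Context: $\mathcal{H}$ is $k$-conformal if every inclusion-minimal subset of $V$ that is not contained in any hyperedge of $\mathcal{H}$ has size at most $k$. A $k$-trace on $V$ is a pair $(T,S)$ with $S\subseteq V$, $|S|=k$, $T\subseteq S$; $F$ realizes it if $F\cap S=T$. $\mathrm{traces}_k(\mathcal{H})$ is the set of $k$-traces realized by hyperedges of $\mathcal{H}$, and $\mathrm{ext}_k(\mathcal{H})$ is the hypergraph on $V$ of all $E\subseteq V$ such that every $k$-trace realized by $E$ lies in $\mathrm{traces}_k(\mathcal{H})$. *)

From mathcomp Require Import all_boot.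
Set Implicit Arguments.
Unset Strict Implicit.
Unset Printing Implicit Defensive.

Definition covered (V : finType) (H : {set {set V}}) (X : {set V}) : bool :=
  [exists F in H, X \subset F].

Definition conformal (V : finType) (k : nat) (H : {set {set V}}) : Prop :=
  forall X : {set V}, minset (fun Y => ~~ covered H Y) X -> #|X| <= k.

Definition is_ktrace (V : finType) (k : nat) (p : {set V} * {set V}) : bool :=
  (#|p.2| == k) && (p.1 \subset p.2).

Definition realizes (V : finType) (F : {set V}) (p : {set V} * {set V}) : bool :=
  F :&: p.2 == p.1.

Definition traces (V : finType) (k : nat) (H : {set {set V}})
  : {set {set V} * {set V}} :=
  [set p | is_ktrace k p & [exists F in H, realizes F p]].

Definition ext (V : finType) (k : nat) (H : {set {set V}}) : {set {set V}} :=
  [set E | [forall p, (is_ktrace k p && realizes E p) ==> (p \in traces k H)]].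

(* If E is not covered by H, it contains a minimal uncovered set X, which has
   at most k elements by conformality.  Enlarging X to a k-set S, the trace of
   E on S must be realized by some hyperedge F, i.e. F :&: S = E :&: S; since
   X lies inside E :&: S, it lies inside F, contradicting that X is uncovered. *)

From mathcomp Require Import all_boot.

Set Implicit Arguments.
Unset Strict Implicit.
Unset Printing Implicit Defensive.

Lemma subset_card_extend (T : finType) (X : {set T}) (n : nat) :
  #|X| <= n -> n <= #|T| -> exists2 S : {set T}, X \subset S & #|S| = n.
Proof.
elim: n => [|n IHn] leXn lenT.
  by exists X => //; apply/eqP; rewrite -leqn0.
have [ltXn | eqXn] := ltnP #|X| n.+1; last first.
  by exists X => //; apply/eqP; rewrite eqn_leq leXn eqXn.
have [S subXS cardS] := IHn ltXn (ltnW lenT).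
have /subsetPn [x _ xNS] : ~~ ([set: T] \subset S).
  by apply: contraTN lenT => /subset_leq_card; rewrite cardsT cardS -ltnNge.
exists (x |: S); first exact: subset_trans subXS (subsetUr _ _).
by rewrite cardsU1 xNS cardS.
Qed.

Lemma covered_subset (V : finType) (H : {set {set V}}) (X Y : {set V}) :
  X \subset Y -> covered H Y -> covered H X.
Proof.
move=> subXY /existsP [F /andP [FH subYF]].
by apply/existsP; exists F; rewrite FH (subset_trans subXY).
Qed.

Lemma conformal_small_uncovered (V : finType) (k : nat) (H : {set {set V}})
    (E : {set V}) :
  conformal k H -> ~~ covered H E ->
  exists X : {set V}, [/\ X \subset E, ~~ covered H X & #|X| <= k].
Proof.
move=> confH uncovE.
have [X minX subXE] := @minset_exists _ (fun Y => ~~ covered H Y) E uncovE.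
by exists X; split; [| exact: minsetp minX | exact: confH].
Qed.

Lemma ext_trace_realized (V : finType) (k : nat) (H : {set {set V}})
    (E S : {set V}) :
  E \in ext k H -> #|S| = k -> exists2 F, F \in H & F :&: S = E :&: S.
Proof.
rewrite inE => /forallP /(_ (E :&: S, S)) extE cardS.
move: extE; rewrite /is_ktrace /realizes /= cardS eqxx subsetIr eqxx inE.
by case/andP=> _ /existsP [F /andP [FH /eqP FS]]; exists F.
Qed.

Theorem proposition2 (V : finType) (k : nat) (H : {set {set V}}) (E : {set V}) :
  k <= #|V| -> conformal k H -> E \in ext k H ->
  exists2 F, F \in H & E \subset F.
Proof.
move=> lekV confH extE.
have [/existsP [F /andP [FH subEF]] | uncovE] := boolP (covered H E).
  by exists F.
have [X [subXE uncovX cardX]] := conformal_small_uncovered confH uncovE.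
have [S subXS cardS] := subset_card_extend cardX lekV.
have [F FH traceF] := ext_trace_realized extE cardS.
have covES : covered H (E :&: S).
  by apply/existsP; exists F; rewrite FH -traceF subsetIl.
have subXES : X \subset E :&: S by rewrite subsetI subXE subXS.
by rewrite (covered_subset subXES covES) in uncovX.
Qed.
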